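(* Let $\lambda_1,\dots,\lambda_r$ be dominant integral weights of $\mathfrak{g}$ and let $b_1,\dots,b_r\in(F^\times)^N$ satisfy $m(b_i)\ne m(b_j)$ whenever $i\ne j$. Then $V(\lambda,b)=V_{\lambda_1}(b_1)\otimes\cdots\otimes V_{\lambda_r}(b_r)$ is a finite-dimensional simple $\mathcal{L}$-module.
   Context: $F$ is an algebraically closed field of characteristic zero; $\mathfrak{g}$ is a finite-dimensional simple Lie algebra over $F$ with fixed Cartan subalgebra $\mathfrak{h}$ and base $\Delta$ of simple roots; $\sigma_1,\dots,\sigma_N$ are pairwise commuting automorphisms of $\mathfrak{g}$ of finite orders $m_1,\dots,m_N$; $\xi_i\in F$ is a fixed primitive $m_i$-th root of unity. $G=\mathbb{Z}/m_1\mathbb{Z}\times\cdots\times\mathbb{Z}/m_N\mathbb{Z}$, $\bar k$ is the image of $k\in\mathbb{Z}^N$, $\mathfrak{g}_{\bar k}=\{x\in\mathfrak{g}:\sigma_ix=\xi_i^{k_i}x\ \forall i\}$. $R=F[t_1^{\pm1},\dots,t_N^{\pm1}]$, $t^k=t_1^{k_1}\cdots t_N^{k_N}$. The multiloop algebra is $\mathcal{L}=\bigoplus_{k\in\mathbb{Z}^N}\mathfrak{g}_{\bar k}\otimes Ft^k\subseteq\mathfrak{g}\otimes R$ with pointwise bracket $[x\otimes f,y\otimes g]=[x,y]\otimes fg$. For $b=(b_1,\dots,b_N)\in(F^\times)^N$, $m(b)=(b_1^{m_1},\dots,b_N^{m_N})$. For a dominant integral weight $\lambda$, $V_\lambda$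 is the simple $\mathfrak{g}$-module of highest weight $\lambda$ and $V_\lambda(b)$ is the $\mathcal{L}$-module $V_\lambda$ with action $(x\otimes f).v=f(b)\,x.v$; $V(\lambda,b)$ carries the tensor product $\mathcal{L}$-action. *)

From HB Require Import structures.
From mathcomp Require Import all_boot all_order all_algebra.
Set Implicit Arguments. Unset Strict Implicit. Unset Printing Implicit Defensive.
Import Order.TTheory GRing.Theory Num.Theory.
Local Open Scope ring_scope.

(* The Lie algebra g is F^d = 'rV[F]_d with a bracket br. Subspaces of g are
   row spaces of matrices. *)
Section Lie.
Variables (F : fieldType) (d : nat).
Implicit Types (br : 'rV[F]_d -> 'rV[F]_d -> 'rV[F]_d).

Definition is_lie_bracket br :=
  [/\ (forall (a : F) x y z, br (a *: x + y) z = a *: br x z + br y z),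
      (forall x, br x x = 0) &
      (forall x y z, br x (br y z) + br y (br z x) + br z (br x y) = 0)].

Definition lie_ideal br (I : 'M[F]_d) :=
  forall x y : 'rV[F]_d, (x <= I)%MS -> (br x y <= I)%MS.

Definition lie_simple br :=
  [/\ is_lie_bracket br,
      (exists x y, br x y != 0) &
      (forall I, lie_ideal br I -> I == 0 \/ row_full I)].

Definition lie_aut br (S : 'M[F]_d) :=
  S \in unitmx /\ forall x y, br x y *m S = br (x *m S) (y *m S).

Definition has_order (S : 'M[F]_d) (m : nat) :=
  [/\ (0 < m)%N, S ^+ m = 1%:M & forall k, (0 < k < m)%N -> S ^+ k != 1%:M].

(* rho : g -> gl_n is a representation (acting on column vectors F^n) *)
Definition lie_rep br n (rho : 'rV[F]_d -> 'M[F]_n) :=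
  (forall (a : F) x y, rho (a *: x + y) = a *: rho x + rho y) /\
  (forall x y, rho (br x y) = rho x *m rho y - rho y *m rho x).

(* Invariance of the column space spanned by the rows of W under A
   (column-vector convention): A W^T <= W^T, i.e. W A^T <= W. *)
Definition col_stable n (W A : 'M[F]_n) := stablemx W A^T.

Definition irreducible_rep br n (rho : 'rV[F]_d -> 'M[F]_n) :=
  [/\ lie_rep br rho, (0 < n)%N &
      forall W : 'M[F]_n, (forall x, col_stable W (rho x)) ->
        W == 0 \/ row_full W].
End Lie.

(* Tensor product of r spaces F^(n i): basis indexed by J = prod_i 'I_(n i). *)
Definition tidx r (n : 'I_r -> nat) := {dffun forall i : 'I_r, 'I_(n i)}.

(* the operator 1 (x) ... (x) A (x) ... (x) 1 with A in the i-th slot *)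
Definition factor_op (F : fieldType) r (n : 'I_r -> nat) (i : 'I_r)
    (A : 'M[F]_(n i)) : 'M[F]_#|{: tidx n}| :=
  \matrix_(p, q)
    (let jp : tidx n := enum_val p in let jq : tidx n := enum_val q in
     if [forall l : 'I_r, (l != i) ==> (jp l == jq l)]
     then A (jp i) (jq i) else 0).

Definition monom (F : fieldType) N (b : 'I_N -> F) (k : 'I_N -> int) : F :=
  \prod_(l < N) (b l) ^ (k l).

Definition in_grade (F : fieldType) d N (sigma : 'I_N -> 'M[F]_d)
    (xi : 'I_N -> F) (k : 'I_N -> int) (x : 'rV[F]_d) :=
  forall l, x *m sigma l = (xi l ^ (k l)) *: x.

(* action of x (x) t^k on V_{l_1}(b_1) (x) ... (x) V_{l_r}(b_r) *)
Definition L_op (F : fieldType) d N r (n : 'I_r -> nat)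
    (rho : forall i : 'I_r, 'rV[F]_d -> 'M[F]_(n i))
    (b : 'I_r -> 'I_N -> F) (x : 'rV[F]_d) (k : 'I_N -> int)
    : 'M[F]_#|{: tidx n}| :=
  \sum_(i < r) monom (b i) k *: factor_op (rho i x).

From HB Require Import structures.
From mathcomp Require Import all_boot all_order all_algebra ring.
From Stdlib Require Import Classical.
Import GRing.Theory.
Local Open Scope ring_scope.

(* Let W be a subspace of V stable under every x (x) t^k with x in g_(k bar).
   This operator is sum_i b_i^k A_i(x), where A_i(x) is rho_i(x) acting in the
   i-th tensor factor.
   1. Interpolation: replacing k by k + m_l e_l keeps the grade but multiplies
      the i-th term by b_il^(m_l); as the points (b_il^(m_l))_l are pairwise
      distinct, combinations of such operators isolate each A_i(x), x
      homogeneous.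
   2. Grading: every x in g is a sum of homogeneous components (images under
      eigenprojections of the commuting finite-order sigma_l), so W is stable
      under A_i(x) for all x in g.
   3. Burnside: the B such that W is stable under B acting in the i-th factor
      form a subalgebra of M_(n_i)(F) containing rho_i(g); it acts
      irreducibly, so over an algebraically closed field it is all of
      M_(n_i)(F).
   4. The tensor product is irreducible under the operators B acting in a
      single factor, so W is 0 or V. *)

Set Implicit Arguments. Unset Strict Implicit. Unset Printing Implicit Defensive.

Lemma nz_row_entry (F : fieldType) m (v : 'rV[F]_m) : v != 0 -> exists q, v 0 q != 0.
Proof.
move=> nzv; apply/existsP; apply: contraNT nzv => /existsPn v0; apply/eqP/rowP => q.
by rewrite mxE; apply/eqP/negbNE/v0.
Qed.

Lemma prim_root_neq0 (F : fieldType) m (z : F) : m.-primitive_root z -> z != 0.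
Proof. by move=> z_prim; rewrite (prim_root_eq0 z_prim) -lt0n (prim_order_gt0 z_prim). Qed.

Lemma subspace_rowspace (F : fieldType) k (Q : 'rV[F]_k -> Prop) :
  Q 0 -> (forall u v, Q u -> Q v -> Q (u + v)) -> (forall a u, Q u -> Q (a *: u)) ->
  exists M : 'M[F]_k, forall v, Q v <-> (v <= M)%MS.
Proof.
move=> Q0 QD QZ.
pose inQ (M : 'M[F]_k) := forall u : 'rV_k, (u <= M)%MS -> Q u.
have inQ_add M v : inQ M -> Q v -> inQ (M + v)%MS.
  move=> QM Qv u /sub_addsmxP [[u1 u2] /= ->]; apply: QD; first exact/QM/submxMl.
  by have /sub_rVP [a ->] : (u2 *m v <= v)%MS := submxMl _ _; apply: QZ.
(* grow M inside Q until it contains Q; the corank k - rank M decreases *)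
suff grow : forall j M, inQ M -> (k - \rank M <= j)%N ->
    exists2 M', inQ M' & forall v, Q v -> (v <= M')%MS.
  have Q_0 : inQ 0 by move=> u /submx0null ->.
  have [M QM maxM] := grow k 0 Q_0 (leq_subr _ _).
  by exists M => v; split; [apply: maxM | apply: QM].
elim=> [|j IH] M QM corank.
  exists M => // v _; apply: submx_full.
  by rewrite /row_full eqn_leq rank_leq_col -subn_eq0 -leqn0.
case: (classic (forall v, Q v -> (v <= M)%MS)) => [maxM | /not_all_ex_not [v]].
  by exists M.
move=> notQM; have [Qv /negP vM] := imply_to_and _ _ notQM.
apply: (IH _ (inQ_add M v QM Qv)).
have ltM : (M < M + v)%MS by rewrite ltmxE addsmxSl addsmx_sub submx_refl.
rewrite -ltnS (leq_trans _ corank) // ltn_sub2l //.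
  exact: leq_trans (rank_ltmx ltM) (rank_leq_col _).
exact: rank_ltmx.
Qed.

Lemma stable_eigenvector (F : closedFieldType) m n (T : 'M[F]_(m, n)) (f : 'M_n) :
  stablemx T f -> T != 0 ->
  exists (a : F) (w : 'rV_n), [/\ (w <= T)%MS, w != 0 & w *m f = a *: w].
Proof.
move=> sT nzT; set V := row_base T.
have [a] : exists a, root (char_poly (conjmx V f)) a.
  apply/closed_rootP; rewrite size_char_poly; apply/negP => /eqP [].
  by move/eqP; rewrite mxrank_eq0 (negPf nzT).
rewrite -eigenvalue_root_char => /eigenvalueP [y ey nzy].
exists a, (y *m V); split.
- by rewrite -(eq_row_base T) submxMl.
- by rewrite mulmx_free_eq0 ?row_base_free.
- apply/eigenspaceP; rewrite -sub_eigenspace_conjmx ?row_base_free //.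
    by apply/eigenspaceP.
  by rewrite stablemx_row_base.
Qed.

Record subalgebra_mx (F : fieldType) n (P : 'M[F]_n -> Prop) : Prop :=
  SubalgebraMx {
    salg1 : P 1%:M;
    salgD : forall A B, P A -> P B -> P (A + B);
    salgZ : forall a A, P A -> P (a *: A);
    salgM : forall A B, P A -> P B -> P (A *m B) }.

Definition row_irreducible (F : fieldType) n (P : 'M[F]_n -> Prop) :=
  forall U : 'M[F]_n, (forall B, P B -> (U *m B <= U)%MS) -> U = 0 \/ row_full U.

Section Subalgebra.
Variables (F : fieldType) (n : nat) (P : 'M[F]_n -> Prop).
Hypothesis algP : subalgebra_mx P.

Lemma salg0 : P 0.
Proof. by rewrite -(scale0r 1%:M); apply: salgZ (salg1 algP). Qed.

Lemma salg_sum I (s : seq I) (p : pred I) (G : I -> 'M_n) :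
  (forall i, p i -> P (G i)) -> P (\sum_(i <- s | p i) G i).
Proof. exact: (big_ind P salg0 (salgD algP)). Qed.

Lemma subalgebra_tr : subalgebra_mx (fun B => P B^T).
Proof.
case: algP => P1 PD PZ PM; split=> [|A B|a A|A B].
- by rewrite trmx1.
- by rewrite linearD; apply: PD.
- by rewrite linearZ; apply: PZ.
- by rewrite trmx_mul => PA PB; apply: PM.
Qed.

(* If U is invariant under the transposed algebra, the left kernel of U^T is
   invariant under P; hence irreducibility passes to the transposed algebra. *)
Lemma row_irreducible_tr : row_irreducible P -> row_irreducible (fun B => P B^T).
Proof.
move=> irrP U invU.
have invK : forall A, P A -> (kermx U^T *m A <= kermx U^T)%MS.
  move=> A PA; have /submxP [X eX] : (U *m A^T <= U)%MS by apply: invU; rewrite trmxK.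
  have eA : A *m U^T = U^T *m X^T by rewrite -[A]trmxK -trmx_mul eX trmx_mul.
  apply/sub_kermxP; rewrite -mulmxA eA mulmxA.
  by rewrite (sub_kermxP (submx_refl _)) mul0mx.
case: (irrP _ invK) => [/eqP| fullK].
  by rewrite kermx_eq0 /row_free mxrank_tr => fullU; right.
left; apply/eqP; rewrite -trmx_eq0; apply/eqP.
by rewrite -[U^T]mul1mx; apply/sub_kermxP; rewrite sub1mx.
Qed.

End Subalgebra.

Lemma rank_one_factor (F : fieldType) m n (T : 'M[F]_(m, n)) :
  \rank T = 1%N ->
  exists (c : 'cV[F]_m) (v : 'rV[F]_n), [/\ c != 0, v != 0 & T = c *m v].
Proof.
move=> rT; have nzT : T != 0 by rewrite -mxrank_eq0 rT.
have [v vT nzv] := rowV0Pn nzT.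
have Tv : (T <= v)%MS.
  by have [_ <-] := mxrank_leqif_sup vT; rewrite rank_rV nzv rT.
exists (T *m pinvmx v), v; rewrite mulmxKpV //; split=> //.
by apply: contraNneq nzT => c0; rewrite -(mulmxKpV Tv) c0 mul0mx.
Qed.

Section IrreducibleSubalgebra.
Variables (F : fieldType) (n : nat) (P : 'M[F]_n -> Prop).
Hypotheses (algP : subalgebra_mx P) (irrP : row_irreducible P).

Lemma row_orbit_full (v : 'rV[F]_n) : v != 0 -> forall u, exists2 B, P B & u = v *m B.
Proof.
move=> nzv; case: (algP) => P1 PD PZ PM.
have [M orbitM] : exists M : 'M[F]_n,
    forall u, (exists2 B, P B & u = v *m B) <-> (u <= M)%MS.
  apply: subspace_rowspace.
  - by exists 0; [exact: salg0 | rewrite mulmx0].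
  - by move=> _ _ [B PB ->] [C PC ->]; exists (B + C); [exact: PD | rewrite mulmxDr].
  - by move=> a _ [B PB ->]; exists (a *: B); [exact: PZ | rewrite scalemxAr].
have invM B : P B -> (M *m B <= M)%MS.
  move=> PB; apply/row_subP => i; rewrite row_mul.
  have /orbitM [C PC ->] := row_sub i M.
  by apply/orbitM; exists (C *m B); [exact: PM | rewrite mulmxA].
have vM : (v <= M)%MS by apply/orbitM; exists 1%:M; rewrite ?mulmx1.
case: (irrP invM) => [M0 | fullM u]; last exact/orbitM/submx_full.
by move: vM; rewrite M0 submx0 (negPf nzv).
Qed.

End IrreducibleSubalgebra.

Lemma col_orbit_full (F : fieldType) n (P : 'M[F]_n -> Prop) :
  subalgebra_mx P -> row_irreducible P ->
  forall c : 'cV[F]_n, c != 0 -> forall d, exists2 B, P B & d = B *m c.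
Proof.
move=> algP irrP c nzc d; have nzcT : c^T != 0 by rewrite trmx_eq0.
have [B PB eB] :=
  row_orbit_full (subalgebra_tr algP) (row_irreducible_tr irrP) nzcT d^T.
by exists B^T => //; apply: trmx_inj; rewrite trmx_mul trmxK -eB.
Qed.

Section Burnside.
Variables (F : closedFieldType) (n : nat) (P : 'M[F]_n -> Prop).
Hypotheses (algP : subalgebra_mx P) (irrP : row_irreducible P).

(* If T in P has rank >= 2, map a row of T onto a row independent of it and
   subtract an eigenvalue: this yields a nonzero element of P of smaller rank. *)
Lemma rank_descent (T : 'M[F]_n) :
  P T -> (1 < \rank T)%N -> exists2 T', P T' & (0 < \rank T' < \rank T)%N.
Proof.
move=> PT rT; case: (algP) => _ PD PZ PM.
have nzT : T != 0 by rewrite -mxrank_eq0 -lt0n (ltn_trans _ rT).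
have [i nzi] : exists i, row i T != 0.
  by apply/existsP; apply: contraR nzT => /existsPn rT0; apply/eqP/row_matrixP => i;
     rewrite row0; apply/eqP/negbNE/rT0.
have [j nij] : exists j, ~~ (row j T <= row i T)%MS.
  apply/row_subPn; apply: contraTN rT => /mxrankS; rewrite rank_rV nzi.
  by rewrite -leqNgt.
have [B PB eB] := row_orbit_full algP irrP nzi (delta_mx 0 j).
have sT : stablemx T (B *m T) by rewrite mulmxA submxMl.
have [a [w [wT nzw ew]]] := stable_eigenvector sT nzT.
have eC : T *m (B *m T - a%:M) = T *m B *m T + (- a) *: T.
  by rewrite mulmxBr mul_mx_scalar mulmxA scaleNr.
exists (T *m (B *m T - a%:M)).
  by rewrite eC; apply: PD; [apply: (PM); first apply: (PM) | apply: PZ].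
apply/andP; split.
  rewrite lt0n mxrank_eq0; apply: contraNneq nij => T'0.
  have : row i (T *m (B *m T - a%:M)) = 0 by rewrite T'0 row0.
  rewrite row_mul mulmxBr mulmxA -eB mul_mx_scalar -rowE => /eqP.
  by rewrite subr_eq0 => /eqP ->; rewrite scalemx_sub.
rewrite -(mxrank_mul_ker T (B *m T - a%:M)) -addn1 leq_add2l.
have <- : \rank w = 1%N by rewrite rank_rV nzw.
apply: mxrankS; rewrite sub_capmx wT; apply/sub_kermxP.
by rewrite mulmxBr ew mul_mx_scalar subrr.
Qed.

(* Descending from the identity, P contains a matrix of rank one. *)
Lemma rank_one_in_algebra : (0 < n)%N -> exists2 T, P T & \rank T = 1%N.
Proof.
move=> n0.
suff descend k : forall T, P T -> (0 < \rank T <= k)%N -> exists2 T', P T' & \rank T' = 1%N.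
  by apply: (descend n 1%:M (salg1 algP)); rewrite mxrank1 n0 leqnn.
elim: k => [|k IH] T PT /andP [r0 rk]; first by move: r0; rewrite lt0n -leqn0 rk.
case: (ltngtP (\rank T) 1) => [r1|r1|r1]; last by exists T.
  by move: r0; rewrite lt0n -leqn0 -ltnS r1.
have [T' PT' /andP [r0' r']] := rank_descent PT r1.
by apply: (IH T' PT'); rewrite r0' -ltnS (leq_trans r').
Qed.

(* Burnside's theorem: an irreducible subalgebra of M_n(F), F algebraically
   closed, is all of M_n(F).  Each matrix unit is B1 (c v) B2 for a rank-one
   c v in P and suitable B1, B2 in P. *)
Theorem burnside A : P A.
Proof.
case: (posnP n) => [n0 | n0].
  have -> : A = 0 by apply/matrixP => i; move: (ltn_ord i); rewrite {2}n0.
  exact: salg0.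
have [T PT /rank_one_factor [c [v [nzc nzv eT]]]] := rank_one_in_algebra n0.
rewrite [A]matrix_sum_delta; apply: salg_sum => // i _; apply: salg_sum => // j _.
apply: (salgZ algP).
have [B1 PB1 e1] := col_orbit_full algP irrP nzc (delta_mx i 0).
have [B2 PB2 e2] := row_orbit_full algP irrP nzv (delta_mx 0 j).
have -> : delta_mx i j = B1 *m T *m B2 by rewrite eT mulmxA -e1 -mulmxA -e2 mul_delta_mx.
by apply: (salgM algP) => //; apply: (salgM algP).
Qed.

End Burnside.

Section TensorFactors.
Variables (F : fieldType) (r : nat) (n : 'I_r -> nat).
Local Notation J := (tidx n).
Local Notation NN := #|{: tidx n}|.

Definition upd (R : J) (i : 'I_r) (a : 'I_(n i)) : J :=
  @finfun 'I_r (fun l => 'I_(n l)) (dfwith (fun l => R l) a).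
Arguments upd : clear implicits.

Definition agr (i : 'I_r) (R S : J) := [forall l, (l != i) ==> (R l == S l)].

Lemma upd_in R i a : upd R i a i = a.
Proof. by rewrite ffunE dfwith_in. Qed.

Lemma upd_out R i a l : i != l -> upd R i a l = R l.
Proof. by move=> il; rewrite ffunE dfwith_out. Qed.

Lemma upd_upd R i a c : upd (upd R i c) i a = upd R i a.
Proof.
apply/ffunP => l; case: (eqVneq i l) => [<-|il]; first by rewrite !upd_in.
by rewrite !upd_out.
Qed.

Lemma upd_id R i : upd R i (R i) = R.
Proof. by apply/ffunP => l; case: (eqVneq i l) => [<-|il]; rewrite ?upd_in ?upd_out. Qed.

Lemma agr_refl i R : agr i R R.
Proof. by apply/forallP => l; rewrite eqxx implybT. Qed.

Lemma agrC i R S : agr i R S = agr i S R.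
Proof. by apply: eq_forallb => l; rewrite [R l == _]eq_sym. Qed.

Lemma agr_updl i R S a : agr i (upd R i a) S = agr i R S.
Proof. by apply: eq_forallb => l; case: (eqVneq l i) => // li; rewrite upd_out // eq_sym. Qed.

Lemma agr_upd i R a : agr i R (upd R i a).
Proof. by apply/forallP => l; apply/implyP => li; rewrite upd_out // eq_sym. Qed.

Lemma agr_updE i R S : agr i R S -> S = upd R i (S i).
Proof.
move=> /forallP RS; apply/ffunP => l; case: (eqVneq i l) => [<-|il]; first by rewrite upd_in.
by rewrite upd_out //; apply/esym/eqP; move/implyP: (RS l); apply; rewrite eq_sym.
Qed.

Lemma factor_opE i (A : 'M[F]_(n i)) p q :
  factor_op A p q = if agr i (enum_val p) (enum_val q)
                    then A (enum_val p i) (enum_val q i) else 0.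
Proof. by rewrite mxE. Qed.

Lemma sum_factor_op i (A : 'M[F]_(n i)) p (f : 'I_NN -> F) :
  \sum_s factor_op A p s * f s =
  \sum_(c < n i) A (enum_val p i) c * f (enum_rank (upd (enum_val p) i c)).
Proof.
rewrite (partition_big (fun s : 'I_NN => (enum_val s : J) i) xpredT) //=.
apply: eq_bigr => c _.
rewrite (bigD1 (enum_rank (upd (enum_val p) i c))) /=; last by rewrite enum_rankK upd_in.
rewrite big1 ?addr0 => [|s /andP [/eqP si ns]].
  by rewrite factor_opE enum_rankK upd_in agr_upd.
rewrite factor_opE; case: ifP => [/agr_updE ps|]; last by rewrite mul0r.
by move: ns; rewrite -[s]enum_valK ps si eqxx.
Qed.

Lemma factor_op_tr i (A : 'M[F]_(n i)) : (factor_op A)^T = factor_op A^T.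
Proof.
by apply/matrixP => p q; rewrite [LHS]mxE !factor_opE agrC; case: ifP; rewrite ?mxE.
Qed.

Lemma factor_opD i (A B : 'M[F]_(n i)) : factor_op (A + B) = factor_op A + factor_op B.
Proof. by apply/matrixP => p q; rewrite !mxE /=; case: ifP; rewrite ?mxE ?addr0. Qed.

Lemma factor_opZ i a (A : 'M[F]_(n i)) : factor_op (a *: A) = a *: factor_op A.
Proof. by apply/matrixP => p q; rewrite !mxE /=; case: ifP; rewrite ?mxE ?mulr0. Qed.

Lemma factor_op1 i : factor_op (1%:M : 'M[F]_(n i)) = 1%:M.
Proof.
apply/matrixP => p q; rewrite factor_opE !mxE.
case: ifP => [/agr_updE pq | npq]; last first.
  by case: eqP npq => // ->; rewrite agr_refl.
rewrite -(inj_eq enum_val_inj) {2}pq; case: eqP => [<-|pq']; first by rewrite upd_id eqxx.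
by case: eqP => // /(congr1 (fun R : J => R i)); rewrite upd_in.
Qed.

Lemma factor_opM i (A B : 'M[F]_(n i)) :
  factor_op (A *m B) = factor_op A *m factor_op B.
Proof.
apply/matrixP => p q; rewrite factor_opE [RHS]mxE sum_factor_op.
under eq_bigr do rewrite factor_opE enum_rankK agr_updl upd_in.
by case: ifP => _; rewrite ?mxE // big1 // => c _; rewrite mulr0.
Qed.

Lemma factor_op_delta (v : 'rV[F]_NN) i (a c : 'I_(n i)) q :
  (v *m factor_op (delta_mx a c)) 0 q =
  if enum_val q i == c then v 0 (enum_rank (upd (enum_val q) i a)) else 0.
Proof.
have -> : (v *m factor_op (delta_mx a c)) 0 q =
          ((factor_op (delta_mx a c))^T *m v^T) q 0 by rewrite -trmx_mul [RHS]mxE.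
rewrite factor_op_tr mxE; under eq_bigr do rewrite [v^T _ _]mxE.
rewrite sum_factor_op (bigD1 a) //= big1 ?addr0 => [|b nba]; rewrite !mxE.
  by rewrite eqxx; case: eqP; rewrite ?mul1r ?mul0r.
by rewrite (negPf nba) mul0r.
Qed.

Definition supported_upto (v : 'rV[F]_NN) (T0 : J) (t : nat) :=
  forall q, v 0 q != 0 -> forall l : 'I_r, (l < t)%N -> enum_val q l = T0 l.

Lemma localize_step (v : 'rV[F]_NN) (T0 : J) (i : 'I_r) :
  v != 0 -> supported_upto v T0 i ->
  exists a, v *m factor_op (delta_mx a (T0 i)) != 0 /\
            supported_upto (v *m factor_op (delta_mx a (T0 i))) T0 i.+1.
Proof.
move=> nzv supp_v; have [q0 vq0] := nz_row_entry nzv.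
exists (enum_val q0 i); split.
  apply/eqP => /rowP /(_ (enum_rank (upd (enum_val q0) i (T0 i)))).
  rewrite factor_op_delta enum_rankK upd_in eqxx upd_upd upd_id enum_valK mxE.
  by apply/eqP.
move=> q; rewrite factor_op_delta.
case: (enum_val q i =P T0 i) => [qi vq | _]; last by rewrite eqxx.
have supp_q := supp_v _ vq.
move=> l; rewrite ltnS leq_eqVlt => /predU1P [li | lt_li].
  by have -> : l = i by apply: val_inj.
have il : i != l by rewrite neq_ltn lt_li orbT.
by rewrite -(supp_q l lt_li) enum_rankK upd_out.
Qed.

Lemma supported_all (v : 'rV[F]_NN) (T0 : J) :
  supported_upto v T0 r -> v = v 0 (enum_rank T0) *: delta_mx 0 (enum_rank T0).
Proof.
move=> supp_v; apply/rowP => q; rewrite !mxE eqxx /=.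
case: (eqVneq q (enum_rank T0)) => [->|nqT0]; first by rewrite mulr1.
rewrite mulr0; apply: contraNeq nqT0 => vq; have supp_q := supp_v _ vq.
by apply/eqP; rewrite -[q]enum_valK; congr enum_rank; apply/ffunP => l; apply: supp_q.
Qed.

(* Step 4: the tensor product of the F^(n i) is irreducible under the operators
   factor_op A acting in each factor: from any nonzero vector, matrix units in
   the successive factors reach every basis vector. *)
Lemma tensor_irreducible (W : 'M[F]_NN) :
  (forall i (A : 'M[F]_(n i)), stablemx W (factor_op A)) -> W == 0 \/ row_full W.
Proof.
move=> stabW; case: (eqVneq W 0) => [-> | nzW]; [by left | right].
suff unitW T0 : ((delta_mx 0 (enum_rank T0) : 'rV[F]_NN) <= W)%MS.
  rewrite -sub1mx; apply/row_subP => q; rewrite row1.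
  by have := unitW (enum_val q); rewrite enum_valK.
have [v vW [nzv supp_v]] : exists2 v, (v <= W)%MS & v != 0 /\ supported_upto v T0 r.
  suff grow t : (t <= r)%N -> exists2 v, (v <= W)%MS & v != 0 /\ supported_upto v T0 t.
    exact: grow.
  elim: t => [_ | t IH lt_tr].
    by have [v vW nzv] := rowV0Pn nzW; exists v.
  have [v vW [nzv supp_v]] := IH (ltnW lt_tr).
  have [a [nzv' supp_v']] := localize_step nzv (supp_v : supported_upto v T0 (Ordinal lt_tr)).
  by exists (v *m factor_op (delta_mx a (T0 (Ordinal lt_tr))));
     [exact: submx_trans (submxMr _ vW) (stabW _ _) | split].
have vT0 : v 0 (enum_rank T0) != 0.
  by apply: contraNneq nzv => v0; rewrite (supported_all supp_v) v0 scale0r.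
by rewrite -(eqmx_scale _ vT0) -(supported_all supp_v).
Qed.

End TensorFactors.

Section ColStable.
Variables (F : fieldType) (k : nat) (W : 'M[F]_k).

Lemma stablemx_scale a A : stablemx W A -> stablemx W (a *: A).
Proof. by rewrite -mul_scalar_mx => sA; apply: stablemxM => //; apply: stablemxC. Qed.

Lemma col_stableD A B : col_stable W A -> col_stable W B -> col_stable W (A + B).
Proof. by rewrite /col_stable linearD; apply: stablemxD. Qed.

Lemma col_stableZ a A : col_stable W A -> col_stable W (a *: A).
Proof. by rewrite /col_stable linearZ; apply: stablemx_scale. Qed.

Lemma col_stableZK a A : a != 0 -> col_stable W (a *: A) -> col_stable W A.
Proof. by move=> a0 /(col_stableZ a^-1); rewrite scalerA mulVf // scale1r. Qed.

End ColStable.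

(* Step 3: if W is stable under the operators f x acting in the i-th tensor
   factor and the f x act irreducibly, then by Burnside's theorem W is stable
   under every B acting in the i-th factor. *)
Lemma factor_stable_full (F : closedFieldType) r (n : 'I_r -> nat) (i : 'I_r)
    (X : Type) (f : X -> 'M[F]_(n i)) (W : 'M[F]_#|{: tidx n}|) :
  (forall U, (forall x, col_stable U (f x)) -> U == 0 \/ row_full U) ->
  (forall x, col_stable W (factor_op (f x))) ->
  forall B : 'M[F]_(n i), stablemx W (factor_op B).
Proof.
move=> f_irr W_f.
apply: (burnside (P := fun B : 'M[F]_(n i) => stablemx W (factor_op B))) => [|U U_inv].
  split=> [|A B|a A|A B]; rewrite ?factor_op1 ?factor_opD ?factor_opZ ?factor_opM.
  - exact: stablemxC.
  - exact: stablemxD.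
  - exact: stablemx_scale.
  - exact: stablemxM.
have /f_irr [/eqP U0 | U_full] : forall x, col_stable U (f x).
  by move=> x; apply: U_inv; rewrite -factor_op_tr; apply: W_f.
- by left.
- by right.
Qed.

Lemma geom_sum_fixed (R : pzRingType) (u : R) m :
  u ^+ m = 1 -> (\sum_(j < m) u ^+ j) * u = \sum_(j < m) u ^+ j.
Proof.
case: m => [|m] um; first by rewrite big_ord0 mul0r.
rewrite mulr_suml; under eq_bigr do rewrite -exprSr.
by rewrite big_ord_recr [RHS]big_ord_recl /= um addrC.
Qed.

Lemma root_of_unity_sum (F : fieldType) (w : F) m :
  w ^+ m = 1 -> w != 1 -> \sum_(j < m) w ^+ j = 0.
Proof.
move=> wm w1; have /eqP : (\sum_(j < m) w ^+ j) * (w - 1) = 0.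
  by rewrite mulrBr mulr1 geom_sum_fixed // subrr.
by rewrite mulf_eq0 subr_eq0 (negPf w1) orbF => /eqP.
Qed.

(* Scalars commute with matrix powers (square matrices of arbitrary size form a
   ring but not an algebra structure in the library). *)
Lemma exprZ_mx (F : fieldType) d (a : F) (S : 'M[F]_d) j :
  (a *: S) ^+ j = a ^+ j *: S ^+ j.
Proof.
elim: j => [|j IH]; first by rewrite !expr0 scale1r.
by rewrite !exprS IH -!mulmxE -scalemxAl -scalemxAr scalerA.
Qed.

Section EigenProjection.
Variables (F : fieldType) (d m : nat) (S : 'M[F]_d) (z : F).
Hypotheses (z_prim : m.-primitive_root z) (S_m : S ^+ m = 1%:M).

(* Projection onto the z^c-eigenspace of the finite-order matrix S (acting on
   the right of row vectors); m is invertible in F since F contains a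
   primitive m-th root of unity. *)
Definition eigenproj (c : nat) : 'M[F]_d :=
  (m%:R)^-1 *: \sum_(j < m) (z ^- c *: S) ^+ j.

Lemma eigenproj_eigen c : eigenproj c *m S = z ^+ c *: eigenproj c.
Proof.
have zc0 : z ^+ c != 0 by rewrite expf_neq0 // (prim_root_neq0 z_prim).
have Um : (z ^- c *: S) ^+ m = 1.
  by rewrite exprZ_mx S_m exprVn -exprM mulnC exprM (prim_expr_order z_prim) expr1n invr1 scale1r.
rewrite /eigenproj -scalemxAl scalerA mulrC -scalerA; congr (_ *: _).
have SU : S = z ^+ c *: (z ^- c *: S) by rewrite scalerA mulfV ?scale1r.
by rewrite [X in _ *m X]SU -scalemxAr mulmxE geom_sum_fixed.
Qed.

Lemma eigenproj_sum : \sum_(c < m) eigenproj c = 1%:M.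
Proof.
have termE (c j : 'I_m) : (z ^- c *: S) ^+ j = (z ^- j) ^+ c *: S ^+ j.
  by rewrite exprZ_mx !exprVn -!exprM mulnC.
rewrite /eigenproj -scaler_sumr.
under eq_bigr do under eq_bigr do rewrite termE.
rewrite exchange_big /=; under eq_bigr do rewrite -scaler_suml.
have m0 := prim_order_gt0 z_prim.
rewrite (bigD1 (Ordinal m0)) //= [X in _ + X]big1 => [|j nj0]; last first.
  rewrite root_of_unity_sum ?scale0r //.
    by rewrite -exprVn exprAC exprVn (prim_expr_order z_prim) invr1 expr1n.
  rewrite invr_eq1 -(prim_order_dvd z_prim); apply: contra nj0 => m_j.
  by apply/eqP/val_inj; move: m_j; rewrite /dvdn modn_small // => /eqP.
under eq_bigr do rewrite expr0 invr1 expr1n.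
rewrite sumr_const card_ord expr0 addr0 scalerA -[_ *+ m]mulr_natr mul1r mulVf //.
  by rewrite scale1r.
exact: prim_root_natf_neq0 z_prim.
Qed.

Lemma eigenproj_comm (T : 'M[F]_d) c :
  T *m S = S *m T -> T *m eigenproj c = eigenproj c *m T.
Proof.
move=> TS; rewrite /eigenproj -scalemxAl -scalemxAr; congr (_ *: _).
rewrite !mulmxE; apply: commr_sum => j _; apply: commrX.
by rewrite /GRing.comm -!mulmxE -scalemxAr -scalemxAl TS.
Qed.

End EigenProjection.

Section Grading.
Variables (F : fieldType) (d N : nat) (m : 'I_N -> nat) (sigma : 'I_N -> 'M[F]_d)
  (xi : 'I_N -> F).
Hypotheses (sigma_m : forall l, sigma l ^+ m l = 1%:M)
  (sigma_comm : forall l l', sigma l *m sigma l' = sigma l' *m sigma l)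
  (xi_prim : forall l, (m l).-primitive_root (xi l)).

Definition graded_below (t : nat) (x : 'rV[F]_d) :=
  exists k : 'I_N -> int, forall l : 'I_N, (l < t)%N -> x *m sigma l = xi l ^ k l *: x.

(* Projecting a vector graded below t onto an eigenspace of sigma_t yields a
   vector graded below t + 1, since the sigma's commute. *)
Lemma graded_below_proj t (lt_tN : (t < N)%N) x c :
  graded_below t x ->
  graded_below t.+1 (x *m eigenproj (m (Ordinal lt_tN)) (sigma (Ordinal lt_tN))
                                    (xi (Ordinal lt_tN)) c).
Proof.
set lt := Ordinal lt_tN => -[k gk].
exists (fun l => if l == lt then c%:Z else k l) => l.
rewrite ltnS leq_eqVlt => /predU1P [l_t | lt_lt].
  have -> : l = lt by exact: val_inj.
  by rewrite eqxx -mulmxA (eigenproj_eigen (xi_prim lt) (sigma_m lt)) scalemxAr.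
have -> : (l == lt) = false by apply/negbTE; rewrite -val_eqE neq_ltn lt_lt.
rewrite -mulmxA -(eigenproj_comm (m lt) (xi lt) c (sigma_comm l lt)) mulmxA gk //.
by rewrite -scalemxAl.
Qed.

(* Step 2: an additive property holding on all homogeneous elements of the
   Z^N-grading holds everywhere: split x into its sigma_l-eigencomponents one
   automorphism at a time. *)
Lemma graded_decomposition (Pr : 'rV[F]_d -> Prop) :
  (forall x y, Pr x -> Pr y -> Pr (x + y)) ->
  (forall k x, in_grade sigma xi k x -> Pr x) -> forall x, Pr x.
Proof.
move=> PrD Pr_graded.
have Pr0 : Pr 0 by apply: (Pr_graded (fun=> 0)) => l; rewrite mul0mx scaler0.
suff down : forall j, (j <= N)%N -> forall x, graded_below (N - j) x -> Pr x.
  by move=> x; apply: (down N (leqnn N)); rewrite subnn; exists (fun=> 0).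
elim=> [_ x [k gk] | j IH lt_jN x gx].
  by apply: (Pr_graded k) => l; apply: gk; rewrite subn0.
have lt_tN : (N - j.+1 < N)%N by rewrite ltn_subrL (leq_trans _ lt_jN).
set lt := Ordinal lt_tN.
rewrite -[x]mulmx1 -(eigenproj_sum (sigma lt) (xi_prim lt)) mulmx_sumr.
apply: (big_ind Pr Pr0 PrD) => c _; apply: (IH (ltnW lt_jN)).
by rewrite -subnSK //; apply: graded_below_proj.
Qed.

End Grading.

Lemma separating_product (F : fieldType) r N (f : 'I_r -> 'I_N -> F) (i0 : 'I_r) :
  (forall j, j != i0 -> exists l, f j l != f i0 l) ->
  forall t : seq 'I_r, i0 \notin t ->
  exists s : seq ('I_N * F),
    \prod_(p <- s) (f i0 p.1 - p.2) != 0 /\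
    forall i, i \in t -> \prod_(p <- s) (f i p.1 - p.2) = 0.
Proof.
move=> f_sep; elim=> [|j t IH].
  by exists [::]; split => [|i]; rewrite ?big_nil ?oner_eq0.
rewrite in_cons negb_or => /andP [i0j i0t].
have [s [s_i0 s_t]] := IH i0t.
have [l jl] : exists l, f j l != f i0 l by apply: f_sep; rewrite eq_sym.
exists ((l, f j l) :: s); split.
  by rewrite big_cons mulf_neq0 // subr_eq0 eq_sym.
move=> i; rewrite in_cons big_cons => /predU1P [-> | it]; first by rewrite subrr mul0r.
by rewrite s_t // mulr0.
Qed.

Section Interpolation.
Variables (F : fieldType) (d N r : nat) (n : 'I_r -> nat)
  (rho : forall i : 'I_r, 'rV[F]_d -> 'M[F]_(n i))
  (b : 'I_r -> 'I_N -> F) (m : 'I_N -> nat) (sigma : 'I_N -> 'M[F]_d)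
  (xi : 'I_N -> F).
Hypotheses (xi_prim : forall l, (m l).-primitive_root (xi l))
  (b_unit : forall i l, b i l != 0).
Local Notation NN := #|{: tidx n}|.
Variable W : 'M[F]_NN.
Hypothesis W_stable : forall k x, in_grade sigma xi k x -> col_stable W (L_op rho b x k).

(* k + m_l e_l: the same grade in G, a different element of Z^N. *)
Definition shift (k : 'I_N -> int) (l : 'I_N) : 'I_N -> int :=
  fun l' => k l' + (if l' == l then (m l)%:Z else 0).

Lemma monom_shift i k l : monom (b i) (shift k l) = monom (b i) k * b i l ^+ m l.
Proof.
rewrite /monom /shift.
under eq_bigr do rewrite expfzDr ?b_unit //.
rewrite big_split /=; congr (_ * _).
rewrite (bigD1 l) //= eqxx big1 ?mulr1 // => l' /negPf ->.
exact: expr0z.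
Qed.

Lemma in_grade_shift k l x : in_grade sigma xi k x -> in_grade sigma xi (shift k l) x.
Proof.
move=> gx l'; rewrite gx /shift; case: eqP => [-> | _]; last by rewrite addr0.
have xi_m : xi l ^ (m l)%:Z = 1 := prim_expr_order (xi_prim l).
by rewrite expfzDr ?(prim_root_neq0 (xi_prim l)) // xi_m mulr1.
Qed.

Definition weighted_op x k (w : 'I_r -> F) :=
  \sum_(i < r) (w i * monom (b i) k) *: factor_op (rho i x).

(* Stability under all graded weighted operators is preserved when the
   weights are multiplied by b_i,l^(m_l) - u: the shifted operator minus u
   times the original. *)
Lemma weighted_stable_mul x w l u :
  (forall k, in_grade sigma xi k x -> col_stable W (weighted_op x k w)) ->
  forall k, in_grade sigma xi k x ->
    col_stable W (weighted_op x k (fun i => (b i l ^+ m l - u) * w i)).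
Proof.
move=> stab_w k gx.
have -> : weighted_op x k (fun i => (b i l ^+ m l - u) * w i) =
          weighted_op x (shift k l) w + (- u) *: weighted_op x k w.
  rewrite /weighted_op scaler_sumr -big_split /=; apply: eq_bigr => i _.
  rewrite monom_shift scalerA -scalerDl; congr (_ *: _); ring.
by apply: col_stableD; [apply/stab_w/in_grade_shift | apply/col_stableZ/stab_w].
Qed.

Lemma weighted_stable_prod (s : seq ('I_N * F)) x k :
  in_grade sigma xi k x ->
  col_stable W (weighted_op x k (fun i => \prod_(p <- s) (b i p.1 ^+ m p.1 - p.2))).
Proof.
elim: s k => [|[l u] s IH] k gx.
  by rewrite /weighted_op; under eq_bigr do rewrite big_nil mul1r; apply: W_stable.
set w := fun i => \prod_(p <- s) (b i p.1 ^+ m p.1 - p.2).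
have -> : weighted_op x k (fun i => \prod_(p <- (l, u) :: s) (b i p.1 ^+ m p.1 - p.2)) =
          weighted_op x k (fun i => (b i l ^+ m l - u) * w i).
  by apply: eq_bigr => i _; rewrite big_cons.
exact: weighted_stable_mul.
Qed.

Hypothesis b_dist : forall i j : 'I_r, i != j ->
  exists l : 'I_N, b i l ^+ m l != b j l ^+ m l.

(* Step 1: since the points (b_i^(m_l))_l are distinct, suitable weights
   isolate a single tensor factor: W is stable under each factor_op (rho i x)
   for homogeneous x. *)
Lemma factor_stable_of_graded x k i0 :
  in_grade sigma xi k x -> col_stable W (factor_op (rho i0 x)).
Proof.
move=> gx; set t := [seq i <- enum 'I_r | i != i0].
have i0t : i0 \notin t by rewrite mem_filter eqxx.
have [s [s_i0 s_t]] :=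
  separating_product (f := fun i l => b i l ^+ m l) (fun j ji0 => b_dist ji0) i0t.
have := weighted_stable_prod s gx.
rewrite /weighted_op (bigD1 i0) //= [X in _ + X]big1 ?addr0 => [|i ii0]; last first.
  by rewrite s_t ?mul0r ?scale0r // mem_filter ii0 mem_enum.
apply: col_stableZK; rewrite mulf_neq0 //.
by apply/prodf_neq0 => l _; rewrite expfz_neq0.
Qed.

End Interpolation.

Lemma lie_rep_add (F : fieldType) d (br : 'rV[F]_d -> 'rV[F]_d -> 'rV[F]_d) n
    (rho : 'rV[F]_d -> 'M[F]_n) :
  lie_rep br rho -> forall x y, rho (x + y) = rho x + rho y.
Proof. by case=> lin _ x y; have := lin 1 x y; rewrite !scale1r. Qed.

Unset Implicit Arguments.

Theorem theorem4p4
  (F : closedFieldType) (charF0 : [pchar F] =i pred0)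
  (d : nat) (br : 'rV[F]_d -> 'rV[F]_d -> 'rV[F]_d) (g_simple : lie_simple br)
  (N : nat) (m : 'I_N -> nat) (sigma : 'I_N -> 'M[F]_d) (xi : 'I_N -> F)
  (sigma_aut : forall l, lie_aut br (sigma l))
  (sigma_ord : forall l, has_order (sigma l) (m l))
  (sigma_comm : forall l l', sigma l *m sigma l' = sigma l' *m sigma l)
  (xi_prim : forall l, (m l).-primitive_root (xi l))
  (r : nat) (n : 'I_r -> nat) (rho : forall i : 'I_r, 'rV[F]_d -> 'M[F]_(n i))
  (rho_irr : forall i, irreducible_rep br (rho i))
  (b : 'I_r -> 'I_N -> F) (b_unit : forall i l, b i l != 0)
  (b_dist : forall i j : 'I_r, i != j ->
              exists l : 'I_N, b i l ^+ m l != b j l ^+ m l) :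
  (0 < #|{: tidx n}|)%N /\
  forall W : 'M[F]_#|{: tidx n}|,
    (forall (k : 'I_N -> int) (x : 'rV[F]_d),
        in_grade sigma xi k x -> col_stable W (L_op rho b x k)) ->
    W == 0 \/ row_full W.
Proof.
have n_pos i : (0 < n i)%N by case: (rho_irr i).
split.
  by apply/card_gt0P; exists (@finfun 'I_r (fun i => 'I_(n i)) (fun i => Ordinal (n_pos i))).
move=> W W_stable; apply: tensor_irreducible => i.
have [rho_rep _ rho_simple] := rho_irr i.
apply: (factor_stable_full rho_simple) => x.
have sigma_m l : sigma l ^+ m l = 1%:M by case: (sigma_ord l).
apply: (graded_decomposition sigma_m sigma_comm xi_prim
          (Pr := fun x => col_stable W (factor_op (rho i x)))) => [y z sy sz | k y gy].
  by rewrite /= (lie_rep_add rho_rep) factor_opD; apply: col_stableD.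
exact: (factor_stable_of_graded xi_prim b_unit W_stable b_dist _ gy).
Qed.
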